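(* Let $p,q,r\in\mathbb R$ satisfy $pq=0$, $pr=0$ and $r(q+2r)=0$. Then the relations $$de^j=r\sum_{s=1}^3(e_j\lrcorner\omega_s)\wedge w^s\ (j=1,\dots,4),\qquad dw^s=p\,\omega_s+q\,w_s\lrcorner w^{123}\ (s=1,2,3)$$ are the structure equations of a $7$-dimensional Lie algebra (with dual basis $e^1,\dots,e^4,w^1,w^2,w^3$), and the $\mathrm{SO}(4)$-structure with adapted coframe $e^1,\dots,e^4,w^1,w^2,w^3$ has invariant intrinsic torsion.
   Context: Here $e_1,\dots,e_4,w_1,w_2,w_3$ is the dual basis, $\lrcorner$ is interior product, $e^{ij}=e^i\wedge e^j$, $\omega_1=e^{12}-e^{34}$, $\omega_2=e^{13}-e^{42}$, $\omega_3=e^{14}-e^{23}$ (so $w_1\lrcorner w^{123}=w^{23}$, $w_2\lrcorner w^{123}=w^{31}$, $w_3\lrcorner w^{123}=w^{12}$). The $\mathrm{SO}(4)$-structure determined by an adapted coframe is the pair $\alpha=\sum_s\omega_s\wedge w^s-3w^{123}$, $\beta=-\omega_1\wedge w^{23}-\omega_2\wedge w^{31}-\omega_3\wedge w^{12}-3e^{1234}$, with the metric making the coframe orthonormal. Identifying $2$-forms with $\mathfrak{so}(7)$ via $e^{ij}\mapsto e^i\otimes e_j-e^j\otimes e_i$ (on $\mathbb R^7$ with $w^s=e^{4+s}$), $\mathfrak{so}(4)$ is spanned by $\varpi_1=e^{12}+e^{34},\varpi_2=e^{13}+e^{42},\varpi_3=e^{14}+e^{23}$ and $\omega_1-2w^{23},\omega_2-2w^{31},\omega_3-2w^{12}$.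 The intrinsic torsion $\xi\in T^*\otimes\mathfrak{so}(4)^\perp$ is the $\mathfrak{so}(4)^\perp$-component of the Levi-Civita connection form in the adapted frame; it is invariant if it lies in the ($2$-dimensional) $\mathrm{SO}(4)$-invariant subspace of $T^*\otimes\mathfrak{so}(4)^\perp$. *)

(* classical reals. Indices 0..6 of the basis of R^7:
   0..3 <-> e_1..e_4,  4..6 <-> w_1..w_3  (so w^s = e^{4+s} in 1-based terms). *)
From Stdlib Require Import Reals Lra Arith.
Open Scope R_scope.

Definition form1 := nat -> R.
Definition form2 := nat -> nat -> R.   (* a k l = a(e_k, e_l) *)
Definition form3 := nat -> nat -> nat -> R.

Definition sum7 (f : nat -> R) : R :=
  f 0%nat + f 1%nat + f 2%nat + f 3%nat + f 4%nat + f 5%nat + f 6%nat.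
Definition sum3 (f : nat -> R) : R := f 1%nat + f 2%nat + f 3%nat.

Definition ee (i : nat) : form1 := fun k => if Nat.eqb k i then 1 else 0.
Definition E (j : nat) : form1 := ee (j - 1).   (* e^j, j = 1..4 *)
Definition W (s : nat) : form1 := ee (s + 3).   (* w^s, s = 1..3 *)

Definition wedge (a b : form1) : form2 := fun k l => a k * b l - a l * b k.
Definition wedge3 (a b c : form1) : form3 := fun k l m =>
  a k * (b l * c m - b m * c l) - a l * (b k * c m - b m * c k)
  + a m * (b k * c l - b l * c k).

Definition add2 (x y : form2) : form2 := fun k l => x k l + y k l.
Definition scal2 (c : R) (x : form2) : form2 := fun k l => c * x k l.
Definition zero2 : form2 := fun _ _ => 0.

Definition int2 (v : nat) (om : form2) : form1 := fun k => om v k.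
Definition int3 (v : nat) (psi : form3) : form2 := fun k l => psi v k l.

Definition omega (s : nat) : form2 :=
  match s with
  | 1%nat => add2 (wedge (E 1) (E 2)) (scal2 (-1) (wedge (E 3) (E 4)))
  | 2%nat => add2 (wedge (E 1) (E 3)) (scal2 (-1) (wedge (E 4) (E 2)))
  | 3%nat => add2 (wedge (E 1) (E 4)) (scal2 (-1) (wedge (E 2) (E 3)))
  | _ => zero2
  end.

Definition w123 : form3 := wedge3 (W 1) (W 2) (W 3).

Definition dE (r : R) (j : nat) : form2 := fun k l =>
  r * sum3 (fun s => wedge (int2 (j - 1) (omega s)) (W s) k l).
Definition dW (p q : R) (s : nat) : form2 :=
  add2 (scal2 p (omega s)) (scal2 q (int3 (s + 3) w123)).

Definition dBasis (p q r : R) (k : nat) : form2 :=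
  if Nat.ltb k 4 then dE r (k + 1) else dW p q (k - 3).

(* bracket determined by the structure equations, via
   d eta (X,Y) = - eta([X,Y]) for left-invariant eta:
   [e_i, e_j] = sum_k c i j k e_k *)
Definition bracket (p q r : R) (i j k : nat) : R := - dBasis p q r k i j.

Definition IsLieAlgebra7 (c : nat -> nat -> nat -> R) : Prop :=
  (forall i j k, (i < 7)%nat -> (j < 7)%nat -> (k < 7)%nat -> c i j k = - c j i k) /\
  (forall i j k l, (i < 7)%nat -> (j < 7)%nat -> (k < 7)%nat -> (l < 7)%nat ->
     sum7 (fun m => c i j m * c m k l + c j k m * c m i l + c k i m * c m j l) = 0).

(* Levi-Civita connection of the left-invariant metric making the basis
   orthonormal (Koszul formula): LC c i j k = < nabla_{e_i} e_j , e_k > *)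
Definition LC (c : nat -> nat -> nat -> R) (i j k : nat) : R :=
  / 2 * (c i j k - c j k i + c k i j).

(* connection form in the adapted frame, as an so(7) = Lambda^2-valued 1-form,
   using e^{jk} <-> e^j (x) e_k - e^k (x) e_j *)
Definition connForm (c : nat -> nat -> nat -> R) (i : nat) : form2 :=
  fun j k => LC c i j k.

(* spanning set of so(4) inside Lambda^2 = so(7) *)
Definition so4gen (t : nat) : form2 :=
  match t with
  | 0%nat => add2 (wedge (E 1) (E 2)) (wedge (E 3) (E 4))
  | 1%nat => add2 (wedge (E 1) (E 3)) (wedge (E 4) (E 2))
  | 2%nat => add2 (wedge (E 1) (E 4)) (wedge (E 2) (E 3))
  | 3%nat => add2 (omega 1) (scal2 (-2) (wedge (W 2) (W 3)))
  | 4%nat => add2 (omega 2) (scal2 (-2) (wedge (W 3) (W 1)))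
  | 5%nat => add2 (omega 3) (scal2 (-2) (wedge (W 1) (W 2)))
  | _ => zero2
  end.

(* standard inner product on 2-forms (the e^{jk}, j<k, orthonormal) *)
Definition ip2 (a b : form2) : R :=
  / 2 * sum7 (fun j => sum7 (fun k => a j k * b j k)).

(* orthogonal projection onto so(4)^perp; the six generators are pairwise
   orthogonal, so this is the standard orthogonal projection *)
Definition projPerp (a : form2) : form2 := fun j k =>
  a j k - (ip2 a (so4gen 0) / ip2 (so4gen 0) (so4gen 0) * so4gen 0 j k
         + ip2 a (so4gen 1) / ip2 (so4gen 1) (so4gen 1) * so4gen 1 j k
         + ip2 a (so4gen 2) / ip2 (so4gen 2) (so4gen 2) * so4gen 2 j k
         + ip2 a (so4gen 3) / ip2 (so4gen 3) (so4gen 3) * so4gen 3 j k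
         + ip2 a (so4gen 4) / ip2 (so4gen 4) (so4gen 4) * so4gen 4 j k
         + ip2 a (so4gen 5) / ip2 (so4gen 5) (so4gen 5) * so4gen 5 j k).

Definition intrinsicTorsion (c : nat -> nat -> nat -> R) (i : nat) : form2 :=
  projPerp (connForm c i).

Definition InSo4 (A : form2) : Prop :=
  exists x : nat -> R, forall j k, (j < 7)%nat -> (k < 7)%nat ->
    A j k = x 0%nat * so4gen 0 j k + x 1%nat * so4gen 1 j k + x 2%nat * so4gen 2 j k
          + x 3%nat * so4gen 3 j k + x 4%nat * so4gen 4 j k + x 5%nat * so4gen 5 j k.

(* infinitesimal action of A in so(7) (A e_a = sum_b A a b e_b) on
   xi in T^* (x) Lambda^2 T^*, xi i j k = xi(e_i)(e_j, e_k) *)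
Definition actT (A : form2) (xi : nat -> form2) (i j k : nat) : R :=
  - sum7 (fun m => A i m * xi m j k + A j m * xi i m k + A k m * xi i j m).

(* invariance under SO(4) (connected, so equivalent to annihilation by so(4)) *)
Definition IsSO4Invariant (xi : nat -> form2) : Prop :=
  forall A, InSo4 A -> forall i j k, (i < 7)%nat -> (j < 7)%nat -> (k < 7)%nat ->
    actT A xi i j k = 0.

From Stdlib Require Import Reals Lia ZArith List Bool.
Open Scope R_scope.

(* The structure constants are linear in (p, q, r): [bracket p q r = p P + q Q + r R]
   for integer tables P, Q, R read off the structure equations.  The Jacobi sum is
   then a quadratic form in (p, q, r); computing its coefficients shows that only
   the combinations pq, pr and r(q + 2r) survive, which the hypotheses kill.
   The intrinsic torsion is linear in the structure constants and the so(4)-action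
   is linear in both arguments, so invariance reduces to the vanishing of the action
   of the six generators of so(4) on the torsion of P, Q and R separately: finitely
   many integer identities, decided by computation. *)

Lemma lt7_cases (i : nat) : (i < 7)%nat ->
  i = 0%nat \/ i = 1%nat \/ i = 2%nat \/ i = 3%nat \/ i = 4%nat \/ i = 5%nat \/ i = 6%nat.
Proof. lia. Qed.

Ltac destruct_lt7 i H :=
  destruct (lt7_cases i H) as [ -> | [ -> | [ -> | [ -> | [ -> | [ -> | -> ] ] ] ] ] ].

Ltac push_IZR :=
  repeat first [rewrite plus_IZR | rewrite mult_IZR | rewrite minus_IZR | rewrite opp_IZR].

Definition sumZ7 (f : nat -> Z) : Z :=
  (f 0%nat + f 1%nat + f 2%nat + f 3%nat + f 4%nat + f 5%nat + f 6%nat)%Z.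

Lemma sum7_ext (f g : nat -> R) : (forall m, f m = g m) -> sum7 f = sum7 g.
Proof. intro H; unfold sum7; rewrite !H; reflexivity. Qed.

Lemma sum7_lincomb3 (a b d : R) (f g h : nat -> R) :
  sum7 (fun m => a * f m + b * g m + d * h m) = a * sum7 f + b * sum7 g + d * sum7 h.
Proof. unfold sum7; ring. Qed.

Lemma sum7_ext_lt7 (f g : nat -> R) :
  (forall m, (m < 7)%nat -> f m = g m) -> sum7 f = sum7 g.
Proof. intro H; unfold sum7; rewrite !H by lia; reflexivity. Qed.

Definition all7 (f : nat -> bool) : bool := forallb f (seq 0 7).

Lemma all7P (f : nat -> bool) : all7 f = true -> forall i, (i < 7)%nat -> f i = true.
Proof.
  unfold all7; rewrite forallb_forall; intros H i Hi; apply H, in_seq; lia.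
Qed.

(* Structure constants are kept as integer tables (indices 0..6), so that the
   finitely many identities they satisfy are decided by [vm_compute]. *)
Definition table := nat -> nat -> nat -> Z.

Definition tableR (X : table) (i j k : nat) : R := IZR (X i j k).

Definition lincomb3 (a b d : R) (c1 c2 c3 : nat -> nat -> nat -> R) (i j k : nat) : R :=
  a * c1 i j k + b * c2 i j k + d * c3 i j k.

Definition bracket_p (a b c : nat) : Z :=
 match a, b, c with
 | 0%nat, 1%nat, 4%nat => (-1)%Z
 | 0%nat, 2%nat, 5%nat => (-1)%Z
 | 0%nat, 3%nat, 6%nat => (-1)%Z
 | 1%nat, 0%nat, 4%nat => (1)%Z
 | 1%nat, 2%nat, 6%nat => (1)%Z
 | 1%nat, 3%nat, 5%nat => (-1)%Z
 | 2%nat, 0%nat, 5%nat => (1)%Z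
 | 2%nat, 1%nat, 6%nat => (-1)%Z
 | 2%nat, 3%nat, 4%nat => (1)%Z
 | 3%nat, 0%nat, 6%nat => (1)%Z
 | 3%nat, 1%nat, 5%nat => (1)%Z
 | 3%nat, 2%nat, 4%nat => (-1)%Z
 | _, _, _ => 0%Z end.

Definition bracket_q (a b c : nat) : Z :=
 match a, b, c with
 | 4%nat, 5%nat, 6%nat => (-1)%Z
 | 4%nat, 6%nat, 5%nat => (1)%Z
 | 5%nat, 4%nat, 6%nat => (1)%Z
 | 5%nat, 6%nat, 4%nat => (-1)%Z
 | 6%nat, 4%nat, 5%nat => (-1)%Z
 | 6%nat, 5%nat, 4%nat => (1)%Z
 | _, _, _ => 0%Z end.

Definition bracket_r (a b c : nat) : Z :=
 match a, b, c with
 | 0%nat, 4%nat, 1%nat => (1)%Z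
 | 0%nat, 5%nat, 2%nat => (1)%Z
 | 0%nat, 6%nat, 3%nat => (1)%Z
 | 1%nat, 4%nat, 0%nat => (-1)%Z
 | 1%nat, 5%nat, 3%nat => (1)%Z
 | 1%nat, 6%nat, 2%nat => (-1)%Z
 | 2%nat, 4%nat, 3%nat => (-1)%Z
 | 2%nat, 5%nat, 0%nat => (-1)%Z
 | 2%nat, 6%nat, 1%nat => (1)%Z
 | 3%nat, 4%nat, 2%nat => (1)%Z
 | 3%nat, 5%nat, 1%nat => (-1)%Z
 | 3%nat, 6%nat, 0%nat => (-1)%Z
 | 4%nat, 0%nat, 1%nat => (-1)%Z
 | 4%nat, 1%nat, 0%nat => (1)%Z
 | 4%nat, 2%nat, 3%nat => (1)%Z
 | 4%nat, 3%nat, 2%nat => (-1)%Z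
 | 5%nat, 0%nat, 2%nat => (-1)%Z
 | 5%nat, 1%nat, 3%nat => (-1)%Z
 | 5%nat, 2%nat, 0%nat => (1)%Z
 | 5%nat, 3%nat, 1%nat => (1)%Z
 | 6%nat, 0%nat, 3%nat => (-1)%Z
 | 6%nat, 1%nat, 2%nat => (1)%Z
 | 6%nat, 2%nat, 1%nat => (-1)%Z
 | 6%nat, 3%nat, 0%nat => (1)%Z
 | _, _, _ => 0%Z end.

Definition so4genZ (a b c : nat) : Z :=
 match a, b, c with
 | 0%nat, 0%nat, 1%nat => (1)%Z
 | 0%nat, 1%nat, 0%nat => (-1)%Z
 | 0%nat, 2%nat, 3%nat => (1)%Z
 | 0%nat, 3%nat, 2%nat => (-1)%Z
 | 1%nat, 0%nat, 2%nat => (1)%Z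
 | 1%nat, 1%nat, 3%nat => (-1)%Z
 | 1%nat, 2%nat, 0%nat => (-1)%Z
 | 1%nat, 3%nat, 1%nat => (1)%Z
 | 2%nat, 0%nat, 3%nat => (1)%Z
 | 2%nat, 1%nat, 2%nat => (1)%Z
 | 2%nat, 2%nat, 1%nat => (-1)%Z
 | 2%nat, 3%nat, 0%nat => (-1)%Z
 | 3%nat, 0%nat, 1%nat => (1)%Z
 | 3%nat, 1%nat, 0%nat => (-1)%Z
 | 3%nat, 2%nat, 3%nat => (-1)%Z
 | 3%nat, 3%nat, 2%nat => (1)%Z
 | 3%nat, 5%nat, 6%nat => (-2)%Z
 | 3%nat, 6%nat, 5%nat => (2)%Z
 | 4%nat, 0%nat, 2%nat => (1)%Z
 | 4%nat, 1%nat, 3%nat => (1)%Z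
 | 4%nat, 2%nat, 0%nat => (-1)%Z
 | 4%nat, 3%nat, 1%nat => (-1)%Z
 | 4%nat, 4%nat, 6%nat => (2)%Z
 | 4%nat, 6%nat, 4%nat => (-2)%Z
 | 5%nat, 0%nat, 3%nat => (1)%Z
 | 5%nat, 1%nat, 2%nat => (-1)%Z
 | 5%nat, 2%nat, 1%nat => (1)%Z
 | 5%nat, 3%nat, 0%nat => (-1)%Z
 | 5%nat, 4%nat, 5%nat => (-2)%Z
 | 5%nat, 5%nat, 4%nat => (2)%Z
 | _, _, _ => 0%Z end.


Lemma bracket_lincomb3 (p q r : R) (i j k : nat) :
  (i < 7)%nat -> (j < 7)%nat -> (k < 7)%nat ->
  bracket p q r i j k =
  lincomb3 p q r (tableR bracket_p) (tableR bracket_q) (tableR bracket_r) i j k.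
Proof.
  intros Hi Hj Hk; destruct_lt7 i Hi; destruct_lt7 j Hj; destruct_lt7 k Hk;
  unfold lincomb3, tableR, bracket, dBasis, dE, dW, sum3, int2, int3, w123, wedge3,
    omega, add2, scal2, wedge, W, E, ee, zero2;
  cbn -[IZR]; ring.
Qed.

Lemma IsLieAlgebra7_ext (c c' : nat -> nat -> nat -> R) :
  (forall i j k, (i < 7)%nat -> (j < 7)%nat -> (k < 7)%nat -> c i j k = c' i j k) ->
  IsLieAlgebra7 c' -> IsLieAlgebra7 c.
Proof.
  intros H [Hanti Hjac]; split.
  - intros i j k Hi Hj Hk; rewrite !H by lia; auto.
  - intros i j k l Hi Hj Hk Hl; generalize (Hjac i j k l Hi Hj Hk Hl).
    unfold sum7; rewrite !H by lia; auto.
Qed.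

Definition antisymb (X : table) : bool :=
  all7 (fun i => all7 (fun j => all7 (fun k => Z.eqb (X i j k) (- X j i k)))).

Lemma antisymbP (X : table) : antisymb X = true ->
  forall i j k, (i < 7)%nat -> (j < 7)%nat -> (k < 7)%nat -> X i j k = (- X j i k)%Z.
Proof.
  intros H i j k Hi Hj Hk.
  apply Z.eqb_eq, (all7P _ (all7P _ (all7P _ H i Hi) j Hj) k Hk).
Qed.

Definition jacobiZ (X Y : table) (i j k l : nat) : Z :=
  sumZ7 (fun m => X i j m * Y m k l + X j k m * Y m i l + X k i m * Y m j l)%Z.

Lemma jacobi_lincomb3 (a b d : R) (X Y Z : table) (i j k l : nat) :
  let c := lincomb3 a b d (tableR X) (tableR Y) (tableR Z) in
  sum7 (fun m => c i j m * c m k l + c j k m * c m i l + c k i m * c m j l) =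
  a * a * IZR (jacobiZ X X i j k l) + b * b * IZR (jacobiZ Y Y i j k l)
  + d * d * IZR (jacobiZ Z Z i j k l)
  + a * b * IZR (jacobiZ X Y i j k l + jacobiZ Y X i j k l)
  + a * d * IZR (jacobiZ X Z i j k l + jacobiZ Z X i j k l)
  + b * d * IZR (jacobiZ Y Z i j k l + jacobiZ Z Y i j k l).
Proof. unfold lincomb3, tableR, sum7, jacobiZ, sumZ7; push_IZR; ring. Qed.

Definition bracket_jacobib : bool :=
  all7 (fun i => all7 (fun j => all7 (fun k => all7 (fun l =>
    Z.eqb (jacobiZ bracket_p bracket_p i j k l) 0
    && Z.eqb (jacobiZ bracket_q bracket_q i j k l) 0
    && Z.eqb (jacobiZ bracket_r bracket_r i j k l)
         (2 * (jacobiZ bracket_q bracket_r i j k l + jacobiZ bracket_r bracket_q i j k l)))))).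

Lemma bracket_tables_jacobi (i j k l : nat) :
  (i < 7)%nat -> (j < 7)%nat -> (k < 7)%nat -> (l < 7)%nat ->
  jacobiZ bracket_p bracket_p i j k l = 0%Z /\
  jacobiZ bracket_q bracket_q i j k l = 0%Z /\
  jacobiZ bracket_r bracket_r i j k l =
    (2 * (jacobiZ bracket_q bracket_r i j k l + jacobiZ bracket_r bracket_q i j k l))%Z.
Proof.
  intros Hi Hj Hk Hl.
  assert (H : bracket_jacobib = true) by (vm_compute; reflexivity).
  pose proof (all7P _ (all7P _ (all7P _ (all7P _ H i Hi) j Hj) k Hk) l Hl) as Hijkl.
  apply andb_prop in Hijkl as [Hpq Hr]; apply andb_prop in Hpq as [Hp Hq].
  apply Z.eqb_eq in Hp, Hq, Hr; auto.
Qed.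

Lemma bracket_tables_IsLieAlgebra7 (p q r : R)
  (hpq : p * q = 0) (hpr : p * r = 0) (hr : r * (q + 2 * r) = 0) :
  IsLieAlgebra7 (lincomb3 p q r (tableR bracket_p) (tableR bracket_q) (tableR bracket_r)).
Proof.
  split.
  - intros i j k Hi Hj Hk; unfold lincomb3, tableR.
    assert (Hanti : forall X, antisymb X = true -> IZR (X i j k) = - IZR (X j i k))
      by (intros X HX; rewrite (antisymbP X HX) by lia; apply opp_IZR).
    rewrite !Hanti by (vm_compute; reflexivity); ring.
  - intros i j k l Hi Hj Hk Hl; rewrite jacobi_lincomb3.
    destruct (bracket_tables_jacobi i j k l Hi Hj Hk Hl) as [-> [-> ->]].
    rewrite mult_IZR.
    set (U := IZR (_ + jacobiZ bracket_q bracket_p i j k l)).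
    set (V := IZR (_ + jacobiZ bracket_r bracket_p i j k l)).
    set (W := IZR (jacobiZ bracket_q bracket_r i j k l + _)).
    transitivity ((p * q) * U + (p * r) * V + (r * (q + 2 * r)) * W); [ring|].
    rewrite hpq, hpr, hr; ring.
Qed.

Lemma intrinsicTorsion_ext (c c' : nat -> nat -> nat -> R) :
  (forall i j k, (i < 7)%nat -> (j < 7)%nat -> (k < 7)%nat -> c i j k = c' i j k) ->
  forall i j k, (i < 7)%nat -> (j < 7)%nat -> (k < 7)%nat ->
  intrinsicTorsion c i j k = intrinsicTorsion c' i j k.
Proof.
  intros H i j k Hi Hj Hk.
  assert (Hip : forall b, ip2 (connForm c i) b = ip2 (connForm c' i) b).
  { intro b; unfold ip2; f_equal; apply sum7_ext_lt7; intros j' Hj'.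
    apply sum7_ext_lt7; intros k' Hk'; unfold connForm, LC; rewrite !H by lia; reflexivity. }
  unfold intrinsicTorsion, projPerp; rewrite !Hip.
  unfold connForm, LC; rewrite !H by lia; reflexivity.
Qed.

Lemma ip2_connForm_lincomb3 (a b d : R) (c1 c2 c3 : nat -> nat -> nat -> R) (i : nat)
  (w : nat -> nat -> R) :
  ip2 (connForm (lincomb3 a b d c1 c2 c3) i) w =
  a * ip2 (connForm c1 i) w + b * ip2 (connForm c2 i) w + d * ip2 (connForm c3 i) w.
Proof.
  unfold ip2.
  rewrite (sum7_ext _ (fun j => a * sum7 (fun k => connForm c1 i j k * w j k)
    + b * sum7 (fun k => connForm c2 i j k * w j k)
    + d * sum7 (fun k => connForm c3 i j k * w j k))).
  - rewrite sum7_lincomb3; ring.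
  - intro j; rewrite <- sum7_lincomb3; apply sum7_ext; intro k.
    unfold connForm, LC, lincomb3; ring.
Qed.

Lemma intrinsicTorsion_lincomb3 (a b d : R) (c1 c2 c3 : nat -> nat -> nat -> R) (i j k : nat) :
  intrinsicTorsion (lincomb3 a b d c1 c2 c3) i j k =
  lincomb3 a b d (intrinsicTorsion c1) (intrinsicTorsion c2) (intrinsicTorsion c3) i j k.
Proof.
  assert (Hconn : connForm (lincomb3 a b d c1 c2 c3) i j k =
    a * connForm c1 i j k + b * connForm c2 i j k + d * connForm c3 i j k)
    by (unfold connForm, LC, lincomb3; ring).
  unfold intrinsicTorsion, projPerp; rewrite !ip2_connForm_lincomb3, Hconn.
  unfold lincomb3, Rdiv; cbv beta; ring.
Qed.

Lemma IsSO4Invariant_ext (xi xi' : nat -> nat -> nat -> R) :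
  (forall i j k, (i < 7)%nat -> (j < 7)%nat -> (k < 7)%nat -> xi i j k = xi' i j k) ->
  IsSO4Invariant xi' -> IsSO4Invariant xi.
Proof.
  intros H Hinv A HA i j k Hi Hj Hk; rewrite <- (Hinv A HA i j k Hi Hj Hk).
  unfold actT, sum7; rewrite !H by lia; reflexivity.
Qed.

Lemma IsSO4Invariant_lincomb3 (a b d : R) (x y z : nat -> nat -> nat -> R) :
  IsSO4Invariant x -> IsSO4Invariant y -> IsSO4Invariant z ->
  IsSO4Invariant (lincomb3 a b d x y z).
Proof.
  intros Hx Hy Hz A HA i j k Hi Hj Hk.
  transitivity (a * actT A x i j k + b * actT A y i j k + d * actT A z i j k).
  - unfold actT, lincomb3, sum7; ring.
  - rewrite Hx, Hy, Hz by assumption; ring.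
Qed.

Lemma IsSO4Invariant_so4gen (xi : nat -> nat -> nat -> R) :
  (forall t i j k, (t < 6)%nat -> (i < 7)%nat -> (j < 7)%nat -> (k < 7)%nat ->
     actT (so4gen t) xi i j k = 0) ->
  IsSO4Invariant xi.
Proof.
  intros Hgen A [x Hx] i j k Hi Hj Hk.
  transitivity (x 0%nat * actT (so4gen 0) xi i j k + x 1%nat * actT (so4gen 1) xi i j k
    + x 2%nat * actT (so4gen 2) xi i j k + x 3%nat * actT (so4gen 3) xi i j k
    + x 4%nat * actT (so4gen 4) xi i j k + x 5%nat * actT (so4gen 5) xi i j k).
  - unfold actT, sum7; rewrite !Hx by lia; ring.
  - rewrite !Hgen by lia; ring.
Qed.

Lemma so4gen_IZR (t j k : nat) : (t < 6)%nat -> (j < 7)%nat -> (k < 7)%nat ->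
  so4gen t j k = IZR (so4genZ t j k).
Proof.
  intros Ht Hj Hk; assert (Ht7 : (t < 7)%nat) by lia.
  destruct_lt7 j Hj; destruct_lt7 k Hk; destruct_lt7 t Ht7; try lia;
  unfold so4gen, omega, add2, scal2, wedge, W, E, ee; cbn -[IZR]; ring.
Qed.

Lemma ip2_so4gen_self (t : nat) : (t < 6)%nat ->
  ip2 (so4gen t) (so4gen t) = if (t <? 3)%nat then 2 else 6.
Proof.
  intro Ht; unfold ip2, sum7; rewrite !so4gen_IZR by lia.
  assert (Ht7 : (t < 7)%nat) by lia; destruct_lt7 t Ht7; try lia; cbn -[IZR]; field.
Qed.

Definition ipZ (X : table) (i t : nat) : Z :=
  sumZ7 (fun j => sumZ7 (fun k => (X i j k - X j k i + X k i j) * so4genZ t j k))%Z.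

Lemma ip2_connForm_so4gen (X : table) (i t : nat) : (t < 6)%nat ->
  ip2 (connForm (tableR X) i) (so4gen t) = IZR (ipZ X i t) / 4.
Proof.
  intro Ht; unfold ip2, sum7; rewrite !so4gen_IZR by lia.
  unfold connForm, LC, tableR, ipZ, sumZ7; push_IZR; field.
Qed.

(* [24] times the torsion: the generators [so4gen 0..2] have squared norm 2 and
   [so4gen 3..5] squared norm 6. *)
Definition torsionZ (X : table) (i j k : nat) : Z :=
  (12 * (X i j k - X j k i + X k i j)
   - (3 * ipZ X i 0 * so4genZ 0 j k + 3 * ipZ X i 1 * so4genZ 1 j k
      + 3 * ipZ X i 2 * so4genZ 2 j k + ipZ X i 3 * so4genZ 3 j k
      + ipZ X i 4 * so4genZ 4 j k + ipZ X i 5 * so4genZ 5 j k))%Z.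

Lemma intrinsicTorsion_IZR (X : table) (i j k : nat) : (j < 7)%nat -> (k < 7)%nat ->
  intrinsicTorsion (tableR X) i j k = IZR (torsionZ X i j k) / 24.
Proof.
  intros Hj Hk; unfold intrinsicTorsion, projPerp.
  rewrite !ip2_connForm_so4gen, !ip2_so4gen_self by lia; cbn [Nat.ltb Nat.leb].
  unfold connForm, LC; rewrite !so4gen_IZR by lia.
  unfold tableR, torsionZ.
  (* abstracting the [ipZ] keeps [push_IZR] from unfolding them, which is very slow *)
  generalize (ipZ X i 0) (ipZ X i 1) (ipZ X i 2) (ipZ X i 3) (ipZ X i 4) (ipZ X i 5).
  intros; push_IZR; field.
Qed.

Definition actZ (X : table) (t i j k : nat) : Z :=
  (- sumZ7 (fun m => so4genZ t i m * torsionZ X m j k + so4genZ t j m * torsionZ X i m k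
                     + so4genZ t k m * torsionZ X i j m))%Z.

Lemma actT_so4gen_IZR (X : table) (t i j k : nat) :
  (t < 6)%nat -> (i < 7)%nat -> (j < 7)%nat -> (k < 7)%nat ->
  actT (so4gen t) (intrinsicTorsion (tableR X)) i j k = IZR (actZ X t i j k) / 24.
Proof.
  intros Ht Hi Hj Hk; unfold actT, sum7.
  rewrite !so4gen_IZR, !intrinsicTorsion_IZR by lia.
  unfold actZ, sumZ7; push_IZR; field.
Qed.

Definition torsion_invariantb (X : table) : bool :=
  all7 (fun t => all7 (fun i => all7 (fun j => all7 (fun k =>
    Z.eqb (actZ X t i j k) 0)))).

Lemma torsion_invariantbP (X : table) :
  torsion_invariantb X = true -> IsSO4Invariant (intrinsicTorsion (tableR X)).
Proof.
  intro H; apply IsSO4Invariant_so4gen; intros t i j k Ht Hi Hj Hk.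
  rewrite actT_so4gen_IZR by lia.
  assert (Ht7 : (t < 7)%nat) by lia.
  rewrite (proj1 (Z.eqb_eq _ _) (all7P _ (all7P _ (all7P _ (all7P _ H t Ht7) i Hi) j Hj) k Hk)).
  unfold Rdiv; ring.
Qed.

Theorem mainTheorem14 (p q r : R)
  (hpq : p * q = 0) (hpr : p * r = 0) (hr : r * (q + 2 * r) = 0) :
  IsLieAlgebra7 (bracket p q r) /\
  IsSO4Invariant (intrinsicTorsion (bracket p q r)).
Proof.
  pose proof (bracket_lincomb3 p q r) as Hbracket.
  split.
  - apply (IsLieAlgebra7_ext _ _ Hbracket), bracket_tables_IsLieAlgebra7; assumption.
  - eapply IsSO4Invariant_ext.
    + intros i j k Hi Hj Hk.
      rewrite (intrinsicTorsion_ext _ _ Hbracket) by assumption.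
      apply intrinsicTorsion_lincomb3.
    + apply IsSO4Invariant_lincomb3; apply torsion_invariantbP; vm_compute; reflexivity.
Qed.
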